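(* Let $\varepsilon>0$ and $x_0$ satisfy $0\le x_0<\tfrac14$ and $\dfrac{\varepsilon^2}{\frac14-\varepsilon^2x_0}<1$; let $\mathcal{C}(\theta)=\tfrac14-\varepsilon^2x_0-\varepsilon^2e^{2\pi i\theta}$, $q_c(z)=z^2+c$, and $\tilde\gamma(\theta)=\tfrac12+\varepsilon e^{2\pi i\theta}\sqrt{1+x_0e^{-4\pi i\theta}}$ (principal branch), $\theta\in\mathbb{T}^1$. Let $\alpha>0$. For each $\theta\in\mathbb{T}^1$ let $\tilde\ell_\theta$ be the affine map of $\mathbb{C}$ with $\tilde\ell_\theta(\tilde\gamma(\theta))=\tilde\gamma(\theta+\tfrac\alpha2)$ and $\tilde\ell_\theta(\tilde\gamma(\theta+\tfrac12))=\tilde\gamma(\theta+\tfrac12+\tfrac\alpha2)$, and define the fibred quadratic polynomial $$\widetilde Q(\theta,\zeta)=\big(\theta+\tfrac\alpha2,\ \tilde\ell_\theta\circ q_{\mathcal{C}(\langle2\theta\rangle)}(\zeta)\big).$$ Then $\tilde\gamma$ is an invariant curve for $\widetilde Q$, i.e. $\tilde\ell_\theta\big(q_{\mathcal{C}(\langle2\theta\rangle)}(\tilde\gamma(\theta))\big)=\tilde\gamma(\theta+\tfrac\alpha2)$ for all $\theta\in\mathbb{T}^1$.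
   Context: $\mathbb{T}^1=\mathbb{R}/\mathbb{Z}$, $\langle x\rangle$ is the fractional part of $x$. The affine map $\tilde\ell_\theta$ is the degree-one Lagrange interpolation polynomial through the two prescribed pairs of points (the points $\tilde\gamma(\theta)$ and $\tilde\gamma(\theta+\frac12)$ are distinct). *)

From Stdlib Require Import Reals.
From Coquelicot Require Import Coquelicot.
Open Scope R_scope.

Definition e2pi (t : R) : C := (cos (2 * PI * t), sin (2 * PI * t)).

(* principal branch of the complex square root (argument in (-pi/2, pi/2]):
   sqrt(a+ib) = sqrt((|z|+a)/2) + i sgn(b) sqrt((|z|-a)/2), with sgn(0)=+1 *)
Definition Csqrt (z : C) : C :=
  let a := fst z in let b := snd z in
  (sqrt ((Cmod z + a) / 2),
   (if Rlt_dec b 0 then -1 else 1) * sqrt ((Cmod z - a) / 2)).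

Definition fracR (x : R) : R := x - IZR (Int_part x).

Definition Ccal (eps x0 theta : R) : C :=
  Cminus (RtoC (/4 - eps ^ 2 * x0)) (Cmult (RtoC (eps ^ 2)) (e2pi theta)).

Definition qpoly (c z : C) : C := Cplus (Cmult z z) c.

Definition gammaT (eps x0 theta : R) : C :=
  Cplus (RtoC (/2))
    (Cmult (Cmult (RtoC eps) (e2pi theta))
       (Csqrt (Cplus (RtoC 1) (Cmult (RtoC x0) (e2pi (-2 * theta)))))).

Definition lagrange1 (p1 v1 p2 v2 : C) (z : C) : C :=
  Cplus v1 (Cmult (Cdiv (Cminus v2 v1) (Cminus p2 p1)) (Cminus z p1)).

Definition ellT (eps x0 alpha theta : R) : C -> C :=
  lagrange1 (gammaT eps x0 theta) (gammaT eps x0 (theta + alpha / 2))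
            (gammaT eps x0 (theta + /2)) (gammaT eps x0 (theta + /2 + alpha / 2)).

(* fibred quadratic polynomial Q~(theta, zeta); theta in T^1 represented by a real *)
Definition Qtilde (eps x0 alpha theta : R) (zeta : C) : R * C :=
  (theta + alpha / 2,
   ellT eps x0 alpha theta (qpoly (Ccal eps x0 (fracR (2 * theta))) zeta)).

(** The curve γ̃ consists of fixed points of the fibre maps: with
    w = γ̃(θ) - 1/2 = ε e(θ) √(1 + x₀ e(-2θ)) one gets
    w² = ε² e(2θ) + ε² x₀ = 1/4 - C(2θ), which is exactly the fixed-point
    equation of q_{C(2θ)} written around 1/2.  Since C(⟨2θ⟩) = C(2θ) by
    periodicity, q_{C(⟨2θ⟩)} fixes γ̃(θ), and ℓ̃_θ sends γ̃(θ) to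
    γ̃(θ + α/2) by construction. *)

From Stdlib Require Import Reals Lra.
From Coquelicot Require Import Coquelicot.
Open Scope R_scope.

Lemma e2pi_add (s t : R) : e2pi (s + t) = (e2pi s * e2pi t)%C.
Proof.
  unfold e2pi, Cmult; simpl.
  replace (2 * PI * (s + t)) with (2 * PI * s + 2 * PI * t) by ring.
  rewrite cos_plus, sin_plus; f_equal; ring.
Qed.

Lemma e2pi_0 : e2pi 0 = RtoC 1.
Proof. unfold e2pi; rewrite Rmult_0_r, cos_0, sin_0; reflexivity. Qed.

Lemma e2pi_1 : e2pi 1 = RtoC 1.
Proof. unfold e2pi; rewrite Rmult_1_r, cos_2PI, sin_2PI; reflexivity. Qed.

Lemma e2pi_INR (n : nat) : e2pi (INR n) = RtoC 1.
Proof.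
  induction n as [|n IHn]; [exact e2pi_0|].
  rewrite S_INR, e2pi_add, IHn, e2pi_1; ring.
Qed.

Lemma e2pi_opp_l (t : R) : (e2pi (- t) * e2pi t = 1)%C.
Proof. rewrite <- e2pi_add, Rplus_opp_l; exact e2pi_0. Qed.

Lemma e2pi_IZR (k : Z) : e2pi (IZR k) = RtoC 1.
Proof.
  destruct k as [|p|p]; [exact e2pi_0| |].
  - change (IZR (Z.pos p)) with (IPR p); rewrite <- INR_IPR; apply e2pi_INR.
  - change (IZR (Z.neg p)) with (- IPR p); rewrite <- INR_IPR.
    rewrite <- (e2pi_opp_l (INR (Pos.to_nat p))), e2pi_INR; ring.
Qed.

Lemma e2pi_fracR (t : R) : e2pi (fracR t) = e2pi t.
Proof.
  unfold fracR; rewrite Rminus_def, <- opp_IZR, e2pi_add, e2pi_IZR; ring.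
Qed.

Lemma Ccal_fracR (eps x0 t : R) : Ccal eps x0 (fracR t) = Ccal eps x0 t.
Proof. unfold Ccal; rewrite e2pi_fracR; reflexivity. Qed.

Lemma Csqrt_sq (z : C) : (Csqrt z * Csqrt z)%C = z.
Proof.
  destruct z as [a b]; unfold Csqrt, Cmult; simpl.
  set (m := Cmod (a, b)).
  assert (Hm2 : m ^ 2 = a ^ 2 + b ^ 2) by apply Cmod2_alt.
  assert (Ham : - m <= a <= m) by apply Rabs_le_between, (re_le_Cmod (a, b)).
  assert (Hplus : 0 <= (m + a) / 2) by lra.
  assert (Hminus : 0 <= (m - a) / 2) by lra.
  assert (Hprod : sqrt ((m + a) / 2) * sqrt ((m - a) / 2) = Rabs b / 2).
  { rewrite <- sqrt_mult by assumption.
    replace ((m + a) / 2 * ((m - a) / 2)) with ((Rabs b / 2) ^ 2)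
      by (unfold Rdiv; rewrite Rpow_mult_distr, pow2_abs; nra).
    apply sqrt_pow2; pose proof (Rabs_pos b); lra. }
  pose proof (sqrt_sqrt _ Hplus); pose proof (sqrt_sqrt _ Hminus).
  destruct (Rlt_dec b 0) as [Hb|Hb].
  - rewrite Rabs_left in Hprod by lra; f_equal; nra.
  - rewrite Rabs_right in Hprod by lra; f_equal; nra.
Qed.

Lemma qpoly_fixed_of_sq (c w : C) :
  (w * w = RtoC (/4) - c)%C -> qpoly c (RtoC (/2) + w)%C = (RtoC (/2) + w)%C.
Proof.
  intros Hw; unfold qpoly; set (h := RtoC (/2)).
  assert (Hh : (h + h = 1)%C) by (unfold h; rewrite <- RtoC_plus; f_equal; field).
  assert (Hh2 : RtoC (/4) = (h * h)%C) by (unfold h; rewrite <- RtoC_mult; f_equal; field).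
  rewrite Hh2 in Hw.
  transitivity (h * (h + h) + (h + h) * w + (w * w - (h * h - c)))%C; [ring|].
  rewrite Hw, Hh; ring.
Qed.

Lemma gammaT_fixed (eps x0 t : R) :
  qpoly (Ccal eps x0 (2 * t)) (gammaT eps x0 t) = gammaT eps x0 t.
Proof.
  unfold gammaT; apply qpoly_fixed_of_sq.
  set (E := e2pi (2 * t)).
  assert (Hsq : (e2pi t * e2pi t = E)%C)
    by (unfold E; rewrite <- e2pi_add; f_equal; ring).
  assert (Hinv : (e2pi (-2 * t) * E = 1)%C)
    by (unfold E; replace (-2 * t) with (- (2 * t)) by ring; apply e2pi_opp_l).
  assert (Heps : (RtoC eps * RtoC eps = RtoC (eps ^ 2))%C)
    by (rewrite <- RtoC_mult; f_equal; ring).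
  assert (Hc : RtoC (/4 - eps ^ 2 * x0) = (RtoC (/4) - RtoC (eps ^ 2) * RtoC x0)%C)
    by (rewrite RtoC_minus, RtoC_mult; reflexivity).
  unfold Ccal; fold E; rewrite Hc.
  set (S := Csqrt _).
  assert (HS : (S * S = 1 + RtoC x0 * e2pi (-2 * t))%C) by apply Csqrt_sq.
  transitivity ((RtoC eps * RtoC eps) * (e2pi t * e2pi t) * (S * S))%C; [ring|].
  rewrite HS, Heps, Hsq.
  transitivity (RtoC (eps ^ 2) * (E + RtoC x0 * (e2pi (-2 * t) * E)))%C; [ring|].
  rewrite Hinv; ring.
Qed.

Lemma lagrange1_first (p1 v1 p2 v2 : C) : lagrange1 p1 v1 p2 v2 p1 = v1.
Proof. unfold lagrange1; ring. Qed.

Lemma ellT_gammaT (eps x0 alpha t : R) :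
  ellT eps x0 alpha t (gammaT eps x0 t) = gammaT eps x0 (t + alpha / 2).
Proof. apply lagrange1_first. Qed.

Theorem mainTheorem3 (eps x0 alpha : R) :
  0 < eps -> 0 <= x0 -> x0 < /4 ->
  eps ^ 2 / (/4 - eps ^ 2 * x0) < 1 ->
  0 < alpha ->
  forall theta : R,
    ellT eps x0 alpha theta
      (qpoly (Ccal eps x0 (fracR (2 * theta))) (gammaT eps x0 theta))
    = gammaT eps x0 (theta + alpha / 2)
  /\ Qtilde eps x0 alpha theta (gammaT eps x0 theta)
     = (theta + alpha / 2, gammaT eps x0 (theta + alpha / 2)).
Proof.
  intros _ _ _ _ _ theta.
  assert (Hinv : ellT eps x0 alpha theta
                   (qpoly (Ccal eps x0 (fracR (2 * theta))) (gammaT eps x0 theta))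
                 = gammaT eps x0 (theta + alpha / 2)).
  { rewrite Ccal_fracR, gammaT_fixed; apply ellT_gammaT. }
  split; [exact Hinv|].
  unfold Qtilde; rewrite Hinv; reflexivity.
Qed.
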